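(* Let $n\ge 3$ and consider the cycle graph on nodes $1,\dots,n$ with measurements $\widetilde{R}_{12},\dots,\widetilde{R}_{n-1,n},\widetilde{R}_{n1}\in\mathrm{SO}(3)$ that all lie in a common one-parameter subgroup of $\mathrm{SO}(3)$ (all are rotations about a common axis). Then the point $R^\ast=(R_1^\ast,\dots,R_n^\ast)$ with $R_1^\ast=I_3$ and $$R_i^\ast=\Big(\prod_{s=1}^{i-1}\widetilde{R}_{s,s+1}\Big)^{\top}E_0^{\,i-1},\qquad i\in\{2,\dots,n\},$$ (product from left to right) is a global minimizer of $f$ over $\mathrm{SO}(3)^n$.
   Context: Cycle-graph rotation averaging setup. Let $n\ge 3$. The cycle graph has nodes $1,\dots,n$ and edges $\{i,i+1\}$ for $i=1,\dots,n-1$ together with $\{n,1\}$; write $i\sim j$ if $\{i,j\}$ is an edge. Each edge carries a measured rotation $\widetilde{R}_{ij}\in\mathrm{SO}(3)$, with the convention $\widetilde{R}_{ji}=\widetilde{R}_{ij}^\top$. Define the symmetric $3n\times 3n$ block matrix $\widetilde{R}$ whose $(i,j)$ $3\times3$ block is $I_3$ if $i=j$, $\widetilde{R}_{ij}$ if $i\sim j$, and $0$ otherwise. For $R=(R_1,\dots,R_n)\in\mathrm{SO}(3)^n$, write $R=[R_1^\top\ \cdots\ R_n^\top]^\top\in\mathbb{R}^{3n\times 3}$ and define $f(R):=-\operatorname{Tr}(R^\top\widetilde{R}R)$; the rotation averaging problem is to minimize $f$ over $\mathrm{SO}(3)^n$. The cycle error is $E:=\widetilde{R}_{12}\widetilde{R}_{23}\cdots\widetilde{R}_{n-1,n}\widetilde{R}_{n1}\in\mathrm{SO}(3)$.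 Write $E=\exp(\gamma[\hat n]_\times)$ with unit axis $\hat n$ and angle $\gamma=\angle(E)\in[-\pi,\pi]$. For $k\in\{0,\dots,n-1\}$, $E_k:=\exp\big((\gamma/n-2k\pi/n)[\hat n]_\times\big)$; in particular $E_0=\exp((\gamma/n)[\hat n]_\times)$. *)

From HB Require Import structures.
From mathcomp Require Import all_boot all_order all_algebra.
From mathcomp Require Import reals trigo.
Set Implicit Arguments. Unset Strict Implicit. Unset Printing Implicit Defensive.
Import Order.TTheory GRing.Theory Num.Theory.
Local Open Scope ring_scope.

Section Defs.
Variable R : realType.

Definition SO3 (Q : 'M[R]_3) : Prop := Q^T *m Q = 1%:M /\ \det Q = 1.

Definition unit_vec (u : 'cV[R]_3) : Prop := \sum_(i < 3) u i 0 ^+ 2 = 1.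

Definition skew (u : 'cV[R]_3) : 'M[R]_3 :=
  \matrix_(i < 3, j < 3)
    (match nat_of_ord i, nat_of_ord j with
     | 0, 1 => - u (inord 2) 0
     | 0, 2 => u (inord 1) 0
     | 1, 0 => u (inord 2) 0
     | 1, 2 => - u (inord 0) 0
     | 2, 0 => - u (inord 1) 0
     | 2, 1 => u (inord 0) 0
     | _, _ => 0
     end).

(* exp(t [u]_x) for a unit axis u, via Rodrigues' formula *)
Definition rotexp (u : 'cV[R]_3) (t : R) : 'M[R]_3 :=
  1%:M + sin t *: skew u + (1 - cos t) *: (skew u *m skew u).

(* Cycle graph on nodes 0..n-1 (0-based); edge i -- (i+1 mod n).
   Rt i is the measurement R~_{i,i+1 mod n}. Block (i,j) of the 3n x 3n
   matrix R~: I if i = j, R~_{ij} if i ~ j (with R~_{ji} = R~_{ij}^T), 0 otherwise. *)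
Definition blk (n : nat) (Rt : 'I_n -> 'M[R]_3) (i j : 'I_n) : 'M[R]_3 :=
  if i == j then 1%:M
  else if ((i.+1 %% n)%N == j) then Rt i
  else if ((j.+1 %% n)%N == i) then (Rt j)^T
  else 0.

(* f(R) = - Tr(R^T R~ R), expanded blockwise *)
Definition fcost (n : nat) (Rt : 'I_n -> 'M[R]_3) (Q : 'I_n -> 'M[R]_3) : R :=
  - \sum_(i < n) \sum_(j < n) \tr ((Q i)^T *m blk Rt i j *m Q j).

Definition cycle_err (n : nat) (Rt : 'I_n -> 'M[R]_3) : 'M[R]_3 :=
  \prod_(i < n) Rt i.

(* candidate R*_k = (prod_{s<k} R~_{s,s+1})^T E0^k  (0-based k) *)
Definition Rstar (n : nat) (Rt : 'I_n -> 'M[R]_3) (E0 : 'M[R]_3) (k : 'I_n)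
  : 'M[R]_3 :=
  (\prod_(s < n | (s < k)%N) Rt s)^T *m (E0 ^+ k).

End Defs.

From Pilot Require Import Defs.
From HB Require Import structures.
From mathcomp Require Import all_boot all_order all_algebra.
From mathcomp Require Import reals trigo.
From mathcomp Require Import ring lra zify.
Set Implicit Arguments. Unset Strict Implicit. Unset Printing Implicit Defensive.
Import Order.TTheory GRing.Theory Num.Theory.
Local Open Scope ring_scope.

(* Gauge fixing by [Rstar] turns every measurement into E0 = exp((gamma/n) [nhat]_x), so with
   Y_i = Rstar_i^T Q_i the claim becomes sum_i tr(Y_i^T E0 Y_(i+1)) <= sum_i tr(Y_i^T E0 Y_i) for
   every cyclic sequence Y, i.e., column by column, an inequality for n-periodic sequences of
   vectors x_j.  The bilinear form of a rotation by phi about a unit axis a splits into an axial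
   part, bounded by sum b_j b_(j+1) <= sum b_j^2, and a planar part cos phi <.,.> + sin phi [.,.].
   Rotating x_j by j psi about a, with n psi = +-pi, makes the planar components antiperiodic,
   and the antiperiodic Wirtinger inequality sum b_j b_(j+1) <= cos(pi/n) sum b_j^2 gives the
   planar bound at phi = +-pi/n.  The case |phi| <= pi/n, in particular phi = gamma/n, follows
   by interpolating between these two endpoints. *)

Lemma big_ord3 (V : nmodType) (F : 'I_3 -> V) :
  \sum_(i < 3) F i = F (inord 0) + F (inord 1) + F (inord 2).
Proof.
rewrite !big_ord_recr big_ord0 /= add0r.
by congr (_ + _ + _); congr F; apply: val_inj; rewrite /= inordK.
Qed.

Lemma ord3_inordP (P : 'I_3 -> Prop) :
  P (inord 0) -> P (inord 1) -> P (inord 2) -> forall i, P i.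
Proof.
move=> P0 P1 P2 [[|[|[|k]]] lt_k3] //.
- by have -> : Ordinal lt_k3 = inord 0 by apply: val_inj; rewrite /= inordK.
- by have -> : Ordinal lt_k3 = inord 1 by apply: val_inj; rewrite /= inordK.
- by have -> : Ordinal lt_k3 = inord 2 by apply: val_inj; rewrite /= inordK.
Qed.

Lemma inord3_eq (i j : nat) : (i < 3)%N -> (j < 3)%N ->
  (inord i == inord j :> 'I_3) = (i == j).
Proof. by move=> lt_i3 lt_j3; rewrite -(inj_eq val_inj) /= !inordK. Qed.

Ltac mx3_entries := apply/matrixP; apply: ord3_inordP; apply: ord3_inordP;
  rewrite ?mxE ?big_ord3 ?mxE ?big_ord1 ?mxE ?inordK ?inord3_eq //=.

Section Rodrigues.
Variables (R : realType) (a : 'cV[R]_3).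
Hypothesis unit_a : unit_vec a.
Local Notation K := (Defs.skew a).

Lemma skew_tr : K^T = - K.
Proof. by mx3_entries; ring. Qed.

Lemma skew_axis : K *m a = 0.
Proof.
apply/matrixP => i j; rewrite [j]ord1; move: i; apply: ord3_inordP;
  rewrite !mxE big_ord3 !mxE ?inordK //=; ring.
Qed.

Lemma skew_sqr : K *m K = a *m a^T - 1%:M.
Proof.
have ord0E : ord0 = 0 :> 'I_1 by [].
by move: unit_a; rewrite /unit_vec big_ord3 => a_unit; mx3_entries; rewrite ord0E; lra.
Qed.

Lemma skew_cube : K *m (K *m K) = - K.
Proof. by rewrite skew_sqr mulmxBr mulmxA skew_axis mul0mx mulmx1 sub0r. Qed.

Lemma skew_pow4 : (K *m K) *m (K *m K) = - (K *m K).
Proof. by rewrite -mulmxA skew_cube mulmxN. Qed.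

Lemma rotexpD s t : rotexp a s *m rotexp a t = rotexp a (s + t).
Proof.
rewrite /rotexp !mulmxDl !mulmxDr !mul1mx !mulmx1 -!scalemxAl -!scalemxAr !scalerA.
have skew_cube' : K *m K *m K = - K by rewrite -mulmxA skew_cube.
rewrite skew_cube skew_cube' skew_pow4.
apply/matrixP => i j; rewrite !mxE sinD cosD; ring.
Qed.

Lemma rotexp0 : rotexp a 0 = 1%:M.
Proof. by rewrite /rotexp sin0 cos0 subrr !scale0r !addr0. Qed.

Lemma rotexp_tr t : (rotexp a t)^T = rotexp a (- t).
Proof.
rewrite /rotexp !linearD !linearZ /= trmx_mul trmx1 skew_tr mulmxN mulNmx opprK.
by rewrite sinN cosN scaleNr scalerN.
Qed.

Lemma rotexpX k t : rotexp a t ^+ k = rotexp a (k%:R * t).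
Proof.
elim: k => [|k IHk]; first by rewrite expr0 mul0r rotexp0.
by rewrite exprS IHk -mulmxE rotexpD -natr1 mulrDl mul1r addrC.
Qed.

Lemma rotexp_orth t : (rotexp a t)^T *m rotexp a t = 1%:M.
Proof. by rewrite rotexp_tr rotexpD addNr rotexp0. Qed.

Lemma rotexp_det t : \det (rotexp a t) = 1.
Proof.
have half : rotexp a t = rotexp a (t / 2) *m rotexp a (t / 2).
  by rewrite rotexpD -splitr.
have det_half2 : \det (rotexp a (t / 2)) ^+ 2 = 1.
  by rewrite expr2 -{1}det_tr -det_mulmx rotexp_orth det1.
by rewrite half det_mulmx -expr2.
Qed.

Lemma SO3_rotexp t : SO3 (rotexp a t).
Proof. by split; [apply: rotexp_orth | apply: rotexp_det]. Qed.

End Rodrigues.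

Section SpecialOrthogonal.
Variable R : realType.
Implicit Types A B : 'M[R]_3.

Lemma SO3_mulmx_tr A : SO3 A -> A *m A^T = 1%:M.
Proof. by case=> /mulmx1C. Qed.

Lemma SO3_1 : SO3 (1%:M : 'M[R]_3).
Proof. by rewrite /SO3 trmx1 mulmx1 det1. Qed.

Lemma SO3_mul A B : SO3 A -> SO3 B -> SO3 (A *m B).
Proof.
move=> [A_orth det_A] [B_orth det_B]; split; last by rewrite det_mulmx det_A det_B mulr1.
by rewrite trmx_mul mulmxA -(mulmxA B^T) A_orth mulmx1.
Qed.

Lemma SO3_tr A : SO3 A -> SO3 A^T.
Proof. by move=> SO3_A; rewrite /SO3 trmxK SO3_mulmx_tr // det_tr; case: SO3_A. Qed.

Lemma SO3_exp A k : SO3 A -> SO3 (A ^+ k).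
Proof.
move=> SO3_A; elim: k => [|k SO3_Ak]; first exact: SO3_1.
by rewrite exprS -mulmxE; apply: SO3_mul.
Qed.

Lemma SO3_prod (I : Type) (r : seq I) (P : pred I) (F : I -> 'M[R]_3) :
  (forall i, SO3 (F i)) -> SO3 (\prod_(i <- r | P i) F i).
Proof.
move=> SO3_F; apply: (big_ind (@SO3 R)); [exact: SO3_1 | | by []].
by move=> A B; rewrite -mulmxE; apply: SO3_mul.
Qed.

Lemma mxtrace_SO3_conj A M : SO3 A -> \tr (A^T *m M *m A) = \tr M.
Proof. by move=> SO3_A; rewrite -mulmxA mxtrace_mulC -mulmxA SO3_mulmx_tr // mulmx1. Qed.

End SpecialOrthogonal.

Lemma sqr_sum_le_weighted (R : realFieldType) (m : nat) (w d : nat -> R) :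
  (forall j, (j < m)%N -> 0 < w j) ->
  (\sum_(0 <= j < m) d j) ^+ 2 <=
  (\sum_(0 <= j < m) (w j)^-1) * \sum_(0 <= j < m) w j * d j ^+ 2.
Proof.
case: m => [|m] w_gt0; first by rewrite !big_geq // expr0n mul0r.
set T := \sum_(0 <= j < m.+1) (w j)^-1.
set D := \sum_(0 <= j < m.+1) d j.
set S := \sum_(0 <= j < m.+1) w j * d j ^+ 2.
have T_gt0 : 0 < T.
  rewrite /T big_nat_recr //= ltr_wpDl ?invr_gt0 ?w_gt0 //.
  rewrite big_nat_cond sumr_ge0 // => j /andP[/andP[_ /ltnW/w_gt0]].
  by rewrite invr_ge0 => /ltW.
have sos : \sum_(0 <= j < m.+1) w j * (T * d j - D / w j) ^+ 2 = T * (T * S - D ^+ 2).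
  transitivity (\sum_(0 <= j < m.+1)
      (T ^+ 2 * (w j * d j ^+ 2) - 2 * T * D * d j + D ^+ 2 * (w j)^-1)).
    by apply: eq_big_nat => j /andP[_ /w_gt0 /lt0r_neq0 wj_neq0]; field.
  by rewrite !big_split /= sumrN -!mulr_sumr -/T -/D -/S; ring.
have : 0 <= T * (T * S - D ^+ 2).
  rewrite -sos big_nat_cond sumr_ge0 // => j /andP[/andP[_ /w_gt0/ltW wj_ge0] _].
  by rewrite mulr_ge0 ?sqr_ge0.
by rewrite pmulr_rge0 // subr_ge0.
Qed.

Lemma sum_sqr_diff (R : comNzRingType) (b : nat -> R) (n : nat) : b n ^+ 2 = b 0 ^+ 2 ->
  \sum_(0 <= j < n) (b j.+1 - b j) ^+ 2 =
  2 * (\sum_(0 <= j < n) b j ^+ 2 - \sum_(0 <= j < n) b j * b j.+1).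
Proof.
move=> bn_sqr.
rewrite (eq_bigr (fun j => (b j.+1 ^+ 2 - b j ^+ 2) + 2 * (b j ^+ 2 - b j * b j.+1)));
  last by move=> j _; ring.
by rewrite big_split /= telescope_sumr // bn_sqr subrr add0r -mulr_sumr sumrB.
Qed.

Lemma periodic_sum_mul_le (R : realDomainType) (b : nat -> R) (n : nat) : b n = b 0 ->
  \sum_(0 <= j < n) b j * b j.+1 <= \sum_(0 <= j < n) b j ^+ 2.
Proof.
move=> bn; rewrite -subr_ge0 -(pmulr_rge0 _ (ltr0n R 2)).
rewrite -sum_sqr_diff ?bn // sumr_ge0 // => j _; apply: sqr_ge0.
Qed.

Lemma sqr_diff_picone (R : fieldType) (b0 b1 v0 v1 : R) : v0 != 0 -> v1 != 0 ->
  (b1 - b0) ^+ 2 =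
  v0 * v1 * (b1 / v1 - b0 / v0) ^+ 2 + b0 ^+ 2 * (1 - v1 / v0) + b1 ^+ 2 * (1 - v0 / v1).
Proof. by move=> v0_neq0 v1_neq0; field; rewrite v0_neq0 v1_neq0. Qed.

Section AntiperiodicSequences.
Variables (R : realType) (m : nat).

Let h : R := pi / m.+2%:R.
(* [v j = sin ((j + 1/2) h)] is positive for [j < m.+2] and satisfies
   [v (j - 1) + v (j + 1) = 2 cos h * v j] with antiperiodic boundary values: it is the ground
   state against which the Picone identity [sqr_diff_picone] is taken. *)
Let x (j : nat) : R := (j%:R + 2^-1) * h.
Let v (j : nat) : R := sin (x j).
Let ct (j : nat) : R := cos (x j) / v j.

Let h_gt0 : 0 < h.
Proof. by rewrite divr_gt0 ?pi_gt0 ?ltr0n. Qed.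

Let x_S j : x j.+1 = x j + h.
Proof. by rewrite /x -natr1; ring. Qed.

Let x0 : x 0 = h / 2.
Proof. by rewrite /x add0r mulrC. Qed.

Let x_last : x m.+1 = pi - h / 2.
Proof.
have : m.+1%:R + 1 != 0 :> R by rewrite natr1 pnatr_eq0.
by rewrite /x /h -[m.+2%:R]natr1; move: (m.+1%:R) => k k_neq0; field.
Qed.

Let v_gt0 j : (j < m.+2)%N -> 0 < v j.
Proof.
move=> lt_jm; have pi_gt0 := pi_gt0 R; have j_ge0 : (0 : R) <= j%:R by [].
have jm : (j%:R : R) + 1 <= m.+2%:R by rewrite -natr1 lerD2r ler_nat.
apply: sin_gt0_pi; apply/andP; split; first by rewrite mulr_gt0 ?h_gt0 //; lra.
by rewrite /x /h mulrA ltr_pdivrMr ?ltr0n //; nra.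
Qed.

Let v_neq0 j : (j < m.+2)%N -> v j != 0.
Proof. by move/v_gt0/lt0r_neq0. Qed.

Let sin_h_gt0 : 0 < sin h.
Proof.
have : h <= pi / 2.
  by rewrite ler_pM2l ?pi_gt0 // lef_pV2 ?posrE ?ler_nat ?ltr0n.
by have := pi_gt0 R; have := h_gt0; move=> *; apply: sin_gt0_pi; apply/andP; split; lra.
Qed.

Let v_ratio_up j : (j < m.+1)%N -> v j.+1 / v j = cos h + sin h * ct j.
Proof. by move=> /ltnW/(@v_neq0 j) vj_neq0; rewrite /ct /v x_S sinD; field. Qed.

Let v_ratio_down j : (j < m.+1)%N -> v j / v j.+1 = cos h - sin h * ct j.+1.
Proof.
move=> lt_jm; have vj1_neq0 := @v_neq0 j.+1 lt_jm; rewrite /ct /v.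
have -> : x j = x j.+1 - h by rewrite x_S addrK.
by rewrite sinB; field.
Qed.

Let inv_weight_telescope j : (j < m.+1)%N -> (v j * v j.+1)^-1 = (ct j - ct j.+1) / sin h.
Proof.
move=> lt_jm; have vj_neq0 := @v_neq0 j (ltnW lt_jm); have vj1_neq0 := @v_neq0 j.+1 lt_jm.
have sin_h : sin h = v j.+1 * cos (x j) - cos (x j.+1) * v j.
  by rewrite -sinB x_S addrAC subrr add0r.
have := lt0r_neq0 sin_h_gt0; rewrite /ct sin_h => sin_h_neq0.
by field; rewrite vj_neq0 vj1_neq0 sin_h_neq0.
Qed.

Let v_last : v m.+1 = v 0.
Proof. by rewrite /v x_last x0 sinB sinpi cospi; ring. Qed.

Let ct_last : ct m.+1 = - ct 0.
Proof. by rewrite /ct v_last x_last x0 cosB sinpi cospi; rewrite /v x0; ring. Qed.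

Let sin_h_half : sin h = 2 * v 0 * cos (x 0).
Proof. by rewrite /v x0 {1}(splitr h) sinD; ring. Qed.

Let sin_h_ct0 : sin h * ct 0 = 1 + cos h.
Proof.
have v0_neq0 : v 0 != 0 by apply: v_neq0.
rewrite /ct sin_h_half {1}(splitr h) cosD -x0 -expr2 -/(v 0) -[sin _ * sin _]expr2.
by rewrite -/(v 0) [v 0 ^+ 2]sin2cos2; field.
Qed.

Let sum_inv_weights : \sum_(0 <= j < m.+1) (v j * v j.+1)^-1 = (v 0 ^+ 2)^-1.
Proof.
have v0_neq0 : v 0 != 0 by apply: v_neq0.
have c0_neq0 : cos (x 0) != 0.
  by have := sin_h_gt0; rewrite sin_h_half pmulr_rgt0 ?mulr_gt0 ?v_gt0 // => /lt0r_neq0.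
rewrite (telescope_sumr_eq (fun j => - ct j / sin h)) //;
  last by move=> j /andP[_ /inv_weight_telescope ->]; ring.
by rewrite ct_last sin_h_half /ct; field; rewrite v0_neq0 c0_neq0.
Qed.

Lemma antiperiodic_sum_mul_le (b : nat -> R) : b m.+2 = - b 0 ->
  \sum_(0 <= j < m.+2) b j * b j.+1 <= cos h * \sum_(0 <= j < m.+2) b j ^+ 2.
Proof.
move=> b_anti.
pose t j := b j / v j.
set B := \sum_(0 <= j < m.+2) b j ^+ 2.
set W := \sum_(0 <= j < m.+1) v j * v j.+1 * (t j.+1 - t j) ^+ 2.
have path_sum : \sum_(0 <= j < m.+1) (b j.+1 - b j) ^+ 2 =
    W + (1 - cos h) * (2 * B - b 0 ^+ 2 - b m.+1 ^+ 2) - (1 + cos h) * (b 0 ^+ 2 + b m.+1 ^+ 2).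
  transitivity (\sum_(0 <= j < m.+1) (v j * v j.+1 * (t j.+1 - t j) ^+ 2
      + (1 - cos h) * (b j ^+ 2 + b j.+1 ^+ 2)
      + sin h * (ct j.+1 * b j.+1 ^+ 2 - ct j * b j ^+ 2))).
    apply: eq_big_nat => j /andP[_ lt_jm].
    rewrite (sqr_diff_picone _ _ (@v_neq0 j (ltnW lt_jm)) (@v_neq0 j.+1 lt_jm)).
    by rewrite v_ratio_up // v_ratio_down // /t; ring.
  rewrite !big_split /= -!mulr_sumr telescope_sumr // ct_last big_split /=.
  have -> : \sum_(0 <= j < m.+1) b j ^+ 2 = B - b m.+1 ^+ 2.
    by rewrite /B (big_nat_recr m.+1) //= addrK.
  have -> : \sum_(0 <= j < m.+1) b j.+1 ^+ 2 = B - b 0 ^+ 2.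
    by rewrite /B (big_nat_recl m.+1) //= [b 0 ^+ 2 + _]addrC addrK.
  by rewrite -sin_h_ct0 -/W; ring.
have wrap : (b 0 - b m.+1) ^+ 2 <= W.
  have w_gt0 j : (j < m.+1)%N -> 0 < v j * v j.+1.
    by move=> lt_jm; rewrite mulr_gt0 ?v_gt0 // ltnW.
  have := sqr_sum_le_weighted (fun j => t j.+1 - t j) w_gt0.
  rewrite telescope_sumr // sum_inv_weights ler_pdivlMl ?exprn_gt0 ?v_gt0 // -/W.
  suff -> : (b 0 - b m.+1) ^+ 2 = v 0 ^+ 2 * (t m.+1 - t 0) ^+ 2 by [].
  by rewrite /t v_last; field; apply: v_neq0.
have := @sum_sqr_diff _ b m.+2; rewrite b_anti sqrrN big_nat_recr //= path_sum b_anti -/B.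
set S := \sum_(0 <= j < m.+2) b j * b j.+1 => /(_ erefl) sum_eq.
have key : 2 * (cos h * B - S) = W - (b 0 - b m.+1) ^+ 2.
  have -> : 2 * (cos h * B - S) = 2 * (B - S) - (2 - 2 * cos h) * B by ring.
  by rewrite -sum_eq; ring.
by rewrite -subr_ge0 -(pmulr_rge0 _ (ltr0n R 2)) key subr_ge0.
Qed.

End AntiperiodicSequences.

Lemma cos_sin_comb_ge0 (R : realType) (h phi D T : R) : 0 < h < pi / 2 -> - h <= phi <= h ->
  0 <= cos h * D - sin h * T -> 0 <= cos h * D + sin h * T -> 0 <= cos phi * D - sin phi * T.
Proof.
move=> /andP[h_gt0 h_lt] /andP[phi_ge phi_le] F_h F_Nh.
have pi_gt0 := pi_gt0 R.
have D_ge0 : 0 <= D.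
  have cos_h_gt0 : 0 < cos h by apply: cos_gt0_pihalf; apply/andP; split; lra.
  by rewrite -(pmulr_rge0 _ cos_h_gt0); lra.
have sin_h_gt0 : 0 < sin h by apply: sin_gt0_pi; apply/andP; split; lra.
have pos_case phi' T' : 0 <= phi' <= h -> 0 <= cos h * D - sin h * T' ->
    0 <= cos phi' * D - sin phi' * T'.
  move=> /andP[phi'_ge0 phi'_le] F'_h.
  have -> : cos phi' * D - sin phi' * T' =
      (sin phi' * (cos h * D - sin h * T') + sin (h - phi') * D) / sin h.
    by rewrite sinB; field; rewrite lt0r_neq0.
  have sin_phi'_ge0 : 0 <= sin phi' by apply: sin_ge0_pi; apply/andP; split; lra.
  have sin_hphi'_ge0 : 0 <= sin (h - phi') by apply: sin_ge0_pi; apply/andP; split; lra.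
  by rewrite divr_ge0 ?addr_ge0 ?mulr_ge0 // ltW.
have [phi_ge0|phi_lt0] := lerP 0 phi; first by apply: pos_case; rewrite ?phi_ge0.
have := pos_case (- phi) (- T); rewrite cosN sinN mulrNN; apply; last by rewrite mulrN opprK.
by apply/andP; split; lra.
Qed.

Section BilinearForm.
Variables (R : comNzRingType) (p : nat).
Implicit Types (M N A B : 'M[R]_p) (x z : 'cV[R]_p).

Definition bform M x z : R := (x^T *m M *m z) 0 0.

Lemma bformDl M N x z : bform (M + N) x z = bform M x z + bform N x z.
Proof. by rewrite /bform mulmxDr mulmxDl mxE. Qed.

Lemma bformNl M x z : bform (- M) x z = - bform M x z.
Proof. by rewrite /bform mulmxN mulNmx mxE. Qed.

Lemma bformZl k M x z : bform (k *: M) x z = k * bform M x z.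
Proof. by rewrite /bform -scalemxAr -scalemxAl mxE. Qed.

Lemma bform_tr M x z : bform M^T z x = bform M x z.
Proof.
rewrite /bform [RHS](_ : _ = ((x^T *m M *m z)^T) 0 0); last by rewrite [RHS]mxE.
by rewrite !trmx_mul trmxK mulmxA.
Qed.

Lemma bform_mulmx M A B x z : bform M (A *m x) (B *m z) = bform (A^T *m M *m B) x z.
Proof. by rewrite /bform trmx_mul !mulmxA. Qed.

Lemma bform1 x z : bform 1%:M x z = \sum_i x i 0 * z i 0.
Proof. by rewrite /bform mulmx1 mxE; apply: eq_bigr => i _; rewrite mxE. Qed.

Lemma mxtrace_bform (Y Z M : 'M[R]_p) :
  \tr (Y^T *m M *m Z) = \sum_(c < p) bform M (col c Y) (col c Z).
Proof.
by apply: eq_bigr => c _; rewrite /bform tr_col colE !mulmxA -colE -!row_mul !mxE.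
Qed.

End BilinearForm.

Lemma antiperiodic_sum_dot_le (R : realType) (p m : nat) (w : nat -> 'cV[R]_p) :
  w m.+2 = - w 0 ->
  \sum_(0 <= j < m.+2) bform 1%:M (w j) (w j.+1) <=
  cos (pi / m.+2%:R) * \sum_(0 <= j < m.+2) bform 1%:M (w j) (w j).
Proof.
move=> w_anti; under eq_bigr do rewrite bform1.
under [X in _ <= _ * X]eq_bigr do rewrite bform1.
rewrite exchange_big [X in _ <= _ * X]exchange_big /= mulr_sumr; apply: ler_sum => i _.
under [X in _ <= _ * X]eq_bigr do rewrite -expr2.
by apply: (antiperiodic_sum_mul_le (b := fun j => w j i 0)); rewrite w_anti mxE.
Qed.

Section AxisDecomposition.
Variables (R : realType) (a : 'cV[R]_3).
Hypothesis unit_a : unit_vec a.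
Local Notation K := (Defs.skew a).
Implicit Types (x y z : 'cV[R]_3).

Definition axial x : R := (a^T *m x) 0 0.
Definition perp_proj x : 'cV[R]_3 := - (K *m K) *m x.
Definition perp_dot x z : R := - bform (K *m K) x z.
Definition perp_cross x z : R := bform K x z.

Lemma bform_rotexp t x z :
  bform (rotexp a t) x z = cos t * perp_dot x z + sin t * perp_cross x z + axial x * axial z.
Proof.
have bform_axis : bform (a *m a^T) x z = axial x * axial z.
  have -> : bform (a *m a^T) x z = (x^T *m a *m (a^T *m z)) 0 0 by rewrite /bform !mulmxA.
  rewrite mxE big_ord1.
  have tr_mx11 (A : 'M[R]_1) : A^T 0 0 = A 0 0 by rewrite mxE.
  by rewrite -(tr_mx11 (x^T *m a)) trmx_mul trmxK.
have bform_id : bform 1%:M x z = axial x * axial z - bform (K *m K) x z.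
  by rewrite -bform_axis -bformNl -bformDl skew_sqr // opprB addrC subrK.
by rewrite /rotexp !bformDl !bformZl bform_id /perp_dot /perp_cross; ring.
Qed.

Lemma perp_cross_xx x : perp_cross x x = 0.
Proof. by have := bform_tr K x x; rewrite skew_tr bformNl /perp_cross; lra. Qed.

Let perp_mx_tr : (- (K *m K))^T = - (K *m K).
Proof.
have -> : (- (K *m K))^T = - (K *m K)^T by exact: linearN.
by rewrite trmx_mul skew_tr mulmxN mulNmx opprK.
Qed.

Lemma perp_dot_proj x z : perp_dot (perp_proj x) (perp_proj z) = perp_dot x z.
Proof.
rewrite /perp_dot /perp_proj bform_mulmx perp_mx_tr !mulNmx mulmxN opprK.
by rewrite skew_pow4 // mulNmx skew_pow4 // opprK.
Qed.

Lemma perp_cross_proj x z : perp_cross (perp_proj x) (perp_proj z) = perp_cross x z.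
Proof.
rewrite /perp_cross /perp_proj bform_mulmx perp_mx_tr mulmxN !mulNmx opprK.
by rewrite -[K *m K *m K]mulmxA skew_cube // mulNmx skew_cube // opprK.
Qed.

Lemma axial_proj x : axial (perp_proj x) = 0.
Proof.
have axis_skew : a^T *m K = 0.
  by rewrite -[K]trmxK -trmx_mul skew_tr mulNmx skew_axis oppr0 trmx0.
by rewrite /axial /perp_proj mulmxA mulmxN mulNmx mulmxA axis_skew !mul0mx oppr0 mxE.
Qed.

Lemma rotexp_perp_proj t x : cos t = -1 -> rotexp a t *m perp_proj x = - perp_proj x.
Proof.
move=> cos_t; have : sin t ^+ 2 == 0 by rewrite sin2cos2 cos_t sqrrN expr1n subrr.
rewrite sqrf_eq0 => /eqP sin_t.
have skew_sqr_proj : K *m K *m perp_proj x = - perp_proj x.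
  by rewrite /perp_proj mulmxA mulmxN skew_pow4 // mulNmx.
rewrite /rotexp sin_t cos_t scale0r addr0 mulmxDl mul1mx -scalemxAl skew_sqr_proj.
have -> : (1 - -1 : R) = 1 + 1 by ring.
by rewrite scalerN scalerDl scale1r opprD addNKr.
Qed.

Lemma bform1_rotexp_proj s t y z :
  bform 1%:M (rotexp a s *m perp_proj y) (rotexp a t *m perp_proj z) =
  cos (t - s) * perp_dot y z + sin (t - s) * perp_cross y z.
Proof.
rewrite bform_mulmx mulmx1 rotexp_tr rotexpD // bform_rotexp perp_dot_proj perp_cross_proj.
by rewrite axial_proj mul0r addr0 [- s + t]addrC.
Qed.

Lemma perp_twisted_sum_le m (x : nat -> 'cV[R]_3) psi :
  x m.+2 = x 0 -> cos (m.+2%:R * psi) = -1 ->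
  cos psi * \sum_(0 <= j < m.+2) perp_dot (x j) (x j.+1)
    + sin psi * \sum_(0 <= j < m.+2) perp_cross (x j) (x j.+1)
  <= cos (pi / m.+2%:R) * \sum_(0 <= j < m.+2) perp_dot (x j) (x j).
Proof.
move=> x_per cos_pi.
pose w j := rotexp a (j%:R * psi) *m perp_proj (x j).
have w_anti : w m.+2 = - w 0.
  by rewrite /w x_per mul0r rotexp0 // mul1mx rotexp_perp_proj.
have step j : j.+1%:R * psi - j%:R * psi = psi by rewrite -natr1; ring.
have := antiperiodic_sum_dot_le w_anti; rewrite /w.
under eq_bigr do rewrite bform1_rotexp_proj step.
under [X in _ <= _ * X]eq_bigr do rewrite bform1_rotexp_proj subrr cos0 sin0 mul1r mul0r addr0.
by rewrite big_split /= -!mulr_sumr.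
Qed.

End AxisDecomposition.

Lemma periodic_sum_bform_rotexp_le (R : realType) (a : 'cV[R]_3) m (x : nat -> 'cV[R]_3) phi :
  unit_vec a -> (1 <= m)%N -> x m.+2 = x 0 -> - (pi / m.+2%:R) <= phi <= pi / m.+2%:R ->
  \sum_(0 <= j < m.+2) bform (rotexp a phi) (x j) (x j.+1) <=
  \sum_(0 <= j < m.+2) bform (rotexp a phi) (x j) (x j).
Proof.
move=> unit_a m_ge1 x_per phi_bound.
have pi_gt0 := pi_gt0 R.
set h := pi / m.+2%:R in phi_bound *.
have h_bounds : 0 < h < pi / 2.
  rewrite divr_gt0 ?ltr0n // ltr_pM2l // ltf_pV2 ?posrE ?ltr0n // ltr_nat.
  by rewrite ltnS ltnS.
have cos_pi : cos (m.+2%:R * h) = -1 by rewrite /h mulrC mulfVK ?pnatr_eq0 // cospi.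
have cos_Npi : cos (m.+2%:R * - h) = -1 by rewrite mulrN cosN.
have twist_pos := perp_twisted_sum_le unit_a x_per cos_pi.
have := perp_twisted_sum_le unit_a x_per cos_Npi; rewrite cosN sinN => twist_neg.
have axial_le :=
  @periodic_sum_mul_le _ (fun j => axial a (x j)) m.+2 (congr1 (axial a) x_per).
under eq_bigr do rewrite bform_rotexp //.
under [X in _ <= X]eq_bigr do rewrite bform_rotexp // perp_cross_xx mulr0 addr0 -expr2.
rewrite !big_split /= -!mulr_sumr.
set G := \sum_(0 <= i < m.+2) perp_dot a (x i) (x i.+1) in twist_pos twist_neg *.
set Gd := \sum_(0 <= i < m.+2) perp_dot a (x i) (x i) in twist_pos twist_neg *.
set T := \sum_(0 <= i < m.+2) perp_cross a (x i) (x i.+1) in twist_pos twist_neg *.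
have : 0 <= cos phi * (Gd - G) - sin phi * T.
  by apply: (cos_sin_comb_ge0 h_bounds phi_bound); lra.
lra.
Qed.

Lemma cycle_sum_tr_rotexp_le (R : realType) (a : 'cV[R]_3) n (Y : 'I_n -> 'M[R]_3) phi :
  unit_vec a -> (3 <= n)%N -> - (pi / n%:R) <= phi <= pi / n%:R ->
  \sum_i \tr ((Y i)^T *m rotexp a phi *m Y (ordS i)) <=
  \sum_i \tr ((Y i)^T *m rotexp a phi *m Y i).
Proof.
case: n Y => [|[|m]] // Y unit_a m_ge1 phi_bound.
under eq_bigr do rewrite mxtrace_bform.
under [X in _ <= X]eq_bigr do rewrite mxtrace_bform.
rewrite exchange_big [X in _ <= X]exchange_big /=; apply: ler_sum => c _.
pose x (j : nat) := col c (Y (inZp j)).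
have x_per : x m.+2 = x 0.
  by rewrite /x; congr (col c (Y _)); apply: val_inj; rewrite /= modnn mod0n.
have := periodic_sum_bform_rotexp_le unit_a m_ge1 x_per phi_bound; rewrite !big_mkord.
have inZp_ord (i : 'I_m.+2) : inZp i = i by apply: val_inj; rewrite /= modn_small.
have inZp_S (i : 'I_m.+2) : inZp i.+1 = ordS i by apply: val_inj.
rewrite (eq_bigr (fun i => bform (rotexp a phi) (col c (Y i)) (col c (Y (ordS i)))));
  last by move=> i _; rewrite /x inZp_ord inZp_S.
rewrite [X in _ <= X -> _](eq_bigr (fun i => bform (rotexp a phi) (col c (Y i)) (col c (Y i))))
  => // i _.
by rewrite /x inZp_ord.
Qed.

Section CycleGraph.
Variables (R : realType) (n : nat).
Hypothesis n_ge3 : (3 <= n)%N.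
Implicit Types (Rt Q : 'I_n -> 'M[R]_3).

Let ordS_val (i : 'I_n) : nat_of_ord (ordS i) = if i.+1 == n then 0%N else i.+1.
Proof.
case: eqP => [/= ->|ne]; first exact: modnn.
by rewrite /= modn_small // ltn_neqAle ltn_ord andbT; apply/eqP.
Qed.

Let ordS_neq (i : 'I_n) : (ordS i == i) = false.
Proof.
apply/eqP => /(congr1 (@nat_of_ord n)); rewrite ordS_val; have := ltn_ord i.
by case: eqP; lia.
Qed.

Let ordSS_neq (i : 'I_n) : (ordS (ordS i) == i) = false.
Proof.
apply/eqP => /(congr1 (@nat_of_ord n)); rewrite ordS_val; move: (ordS_val i) (ltn_ord i).
by case: ifP => /eqP Si_n ->; case: ifP => /eqP; lia.
Qed.

Lemma blk_cycle Rt i j : blk Rt i j =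
  (i == j)%:R *: 1%:M + (ordS i == j)%:R *: Rt i + (ordS j == i)%:R *: (Rt j)^T.
Proof.
rewrite /blk (_ : ((i.+1 %% n)%N == j) = (ordS i == j)) //.
rewrite (_ : ((j.+1 %% n)%N == i) = (ordS j == i)) //.
have [<-|ne_ij] := eqVneq i j; first by rewrite ordS_neq scale1r !scale0r !addr0.
rewrite scale0r add0r; have [<-|ne_Sij] := eqVneq (ordS i) j.
  by rewrite ordSS_neq scale1r scale0r addr0.
by rewrite scale0r add0r; case: (ordS j == i); rewrite ?scale1r ?scale0r.
Qed.

Let sum_delta (k : 'I_n) (F : 'I_n -> R) : \sum_j (k == j)%:R * F j = F k.
Proof.
rewrite (bigD1 k) //= eqxx mul1r big1 ?addr0 // => j /negbTE.
by rewrite eq_sym => ->; rewrite mul0r.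
Qed.

Lemma fcost_cycle Rt Q : fcost Rt Q =
  - (\sum_i \tr ((Q i)^T *m Q i) + 2 * \sum_i \tr ((Q i)^T *m Rt i *m Q (ordS i))).
Proof.
rewrite /fcost; congr (- _).
under eq_bigr do under eq_bigr do rewrite blk_cycle !mulmxDr !mulmxDl -!scalemxAr -!scalemxAl
  !mxtraceD !mxtraceZ mulmx1.
under eq_bigr do rewrite !big_split /=.
rewrite !big_split /= -addrA mulr2n mulrDl mul1r; congr (_ + (_ + _)).
- by apply: eq_bigr => i _; rewrite sum_delta.
- by apply: eq_bigr => i _; rewrite (sum_delta (ordS i) (fun j => \tr ((Q i)^T *m Rt i *m Q j))).
rewrite exchange_big; apply: eq_bigr => j _ /=.
rewrite (sum_delta (ordS j) (fun i => \tr ((Q i)^T *m (Rt j)^T *m Q j))).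
by rewrite -mxtrace_tr !trmx_mul !trmxK mulmxA.
Qed.

End CycleGraph.

Lemma prod_ord_prefixS (T : pzSemiRingType) n (F : 'I_n -> T) k (lt_kn : (k < n)%N) :
  \prod_(s < n | (s < k.+1)%N) F s = (\prod_(s < n | (s < k)%N) F s) * F (Ordinal lt_kn).
Proof.
rewrite (big_ord_narrow lt_kn) (big_ord_narrow (ltnW lt_kn)) big_ord_recr /=.
by congr (_ * F _); [apply: eq_bigr => s _; congr F|]; apply: val_inj.
Qed.

Section GaugeFixing.
Variables (R : realType) (n : nat) (Rt : 'I_n -> 'M[R]_3).
Hypothesis Rt_SO3 : forall i, SO3 (Rt i).

Lemma SO3_Rstar (E0 : 'M[R]_3) k : SO3 E0 -> SO3 (Rstar Rt E0 k).
Proof. by move=> SO3_E0; apply: SO3_mul; [apply/SO3_tr/SO3_prod | apply: SO3_exp]. Qed.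

Lemma Rstar_gauge (b : 'cV[R]_3) gamma (E0 := rotexp b (gamma / n%:R)) :
  unit_vec b -> cycle_err Rt = rotexp b gamma ->
  forall i, (Rstar Rt E0 i)^T *m Rt i *m Rstar Rt E0 (ordS i) = E0.
Proof.
move=> unit_b cycle_E i.
have n_neq0 : n%:R != 0 :> R by rewrite pnatr_eq0 -lt0n (leq_ltn_trans _ (ltn_ord i)).
set phi := gamma / n%:R in E0 *.
pose P (k : nat) := \prod_(s < n | (s < k)%N) Rt s.
have RstarE (k : 'I_n) : Rstar Rt E0 k = (P k)^T *m rotexp b (k%:R * phi).
  by rewrite /Rstar rotexpX.
have P_S : P i *m Rt i = P i.+1.
  by rewrite /P (prod_ord_prefixS _ (ltn_ord i)) mulmxE; congr (_ * Rt _); apply: val_inj.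
rewrite !RstarE trmx_mul trmxK rotexp_tr // -!mulmxA (mulmxA (P i)) P_S.
have [Si_n|Si_lt] := eqVneq i.+1 n.
- have -> : nat_of_ord (ordS i) = 0%N by rewrite /= Si_n modnn.
  have -> : P i.+1 = rotexp b gamma.
    by rewrite -cycle_E /P /cycle_err Si_n; apply: eq_bigl => s; rewrite ltn_ord.
  rewrite /P big_pred0 // mul0r rotexp0 // trmx1 !mulmx1 rotexpD //; congr rotexp.
  have n_eq : n%:R = i%:R + 1 :> R by rewrite natr1 Si_n.
  by rewrite /phi n_eq; field; rewrite -n_eq.
- have -> : nat_of_ord (ordS i) = i.+1.
    by rewrite /= modn_small // ltn_neqAle Si_lt ltn_ord.
  rewrite (mulmxA (P i.+1)) SO3_mulmx_tr; last exact: SO3_prod.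
  rewrite mul1mx rotexpD //; congr rotexp.
  by rewrite -natr1; ring.
Qed.

End GaugeFixing.

Lemma mulmx_gauge (R : comNzRingType) (p : nat) (G1 G2 Q1 Q2 M : 'M[R]_p) :
  G1 *m G1^T = 1%:M -> G2 *m G2^T = 1%:M ->
  Q1^T *m M *m Q2 = (G1^T *m Q1)^T *m (G1^T *m M *m G2) *m (G2^T *m Q2).
Proof.
move=> G1_orth G2_orth; rewrite trmx_mul trmxK !mulmxA -[Q1^T *m G1 *m G1^T]mulmxA G1_orth.
by rewrite mulmx1 -[_ *m G2 *m G2^T]mulmxA G2_orth mulmx1.
Qed.

Theorem theorem1 (R : realType) (n : nat) (Rt : 'I_n -> 'M[R]_3)
  (u : 'cV[R]_3) (theta : 'I_n -> R) (nhat : 'cV[R]_3) (gamma : R) :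
  (3 <= n)%N ->
  (forall i, SO3 (Rt i)) ->
  unit_vec u ->
  (forall i, Rt i = rotexp u (theta i)) ->
  unit_vec nhat -> - pi <= gamma <= pi ->
  cycle_err Rt = rotexp nhat gamma ->
  let Rs := Rstar Rt (rotexp nhat (gamma / n%:R)) in
  (forall k, SO3 (Rs k)) /\
  (forall Q : 'I_n -> 'M[R]_3, (forall k, SO3 (Q k)) ->
     fcost Rt Rs <= fcost Rt Q).
Proof.
move=> n_ge3 Rt_SO3 _ _ unit_nhat gamma_bound cycle_E Rs.
have Rs_SO3 k : SO3 (Rs k) by apply/SO3_Rstar/SO3_rotexp.
have gauge := Rstar_gauge Rt_SO3 unit_nhat cycle_E.
split=> // Q Q_SO3.
have sum_tr_SO3 (Y : 'I_n -> 'M[R]_3) : (forall k, SO3 (Y k)) ->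
    \sum_i \tr ((Y i)^T *m Y i) = \sum_(i < n) \tr (1%:M : 'M[R]_3).
  by move=> Y_SO3; apply: eq_bigr => i _; case: (Y_SO3 i) => ->.
rewrite !fcost_cycle // !sum_tr_SO3 // lerN2 lerD2l ler_pM2l ?ltr0n //.
have Rs_orth i : Rs i *m (Rs i)^T = 1%:M by apply/SO3_mulmx_tr.
under eq_bigr => i _ do rewrite (mulmx_gauge _ _ _ (Rs_orth i) (Rs_orth (ordS i))) gauge.
under [X in _ <= X]eq_bigr do rewrite gauge.
pose Y i := (Rs i)^T *m Q i.
have Y_SO3 i : SO3 (Y i) by apply/SO3_mul/Q_SO3/SO3_tr.
under [X in _ <= X]eq_bigr => i _ do rewrite -(mxtrace_SO3_conj _ (Y_SO3 i)).
apply: cycle_sum_tr_rotexp_le => //.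
have n_gt0 : (0 : R) < n%:R by rewrite ltr0n (leq_trans _ n_ge3).
by rewrite -mulNr !ler_pM2r ?invr_gt0.
Qed.
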